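(* Let $n$ be a positive integer, let $L/K_P$ be a finite extension, and let $\alpha\in K_P^+$ satisfy $v_L(\alpha)\in n\mathbb{Z}$. Then there exists a finite purely inseparable extension $L_1/L$ such that the unique $n$-th root $\alpha^{1/n}\in\mathbb{C}_P^+$ lies in $L_1^+$.
   Context: $X$ is a smooth projective curve over a finite field of characteristic $p$, $P$ a closed point, $K_P$ the completion of its function field at $P$, $\mathbb{C}_P$ the completion of an algebraic closure of $K_P$; all extensions of $K_P$ lie in $\mathbb{C}_P$. For a complete extension $L$ of $K_P$, $\mu_L$ denotes the roots of unity in $L$ and $L^+=L^\times/\mu_L$ is the group of positive numbers; for $L'\subseteq L$ one has $L'^+\subseteq L^+\subseteq\mathbb{C}_P^+$. The group $\mathbb{C}_P^+$ is uniquely divisible. For $L/K_P$ finite, $v_L=e_{L/K_P}v_P$ is the normalized valuation of $L$ (extended to $\mathbb{C}_P$), which is well defined on positive numbers. *)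

From HB Require Import structures.
From mathcomp Require Import all_boot all_order all_algebra.
Set Implicit Arguments. Unset Strict Implicit. Unset Printing Implicit Defensive.
Import Order.TTheory GRing.Theory Num.Theory.
Local Open Scope ring_scope.

Section Defs.
Variable C : fieldType.

Definition is_subfield (S : C -> Prop) : Prop :=
  [/\ S 0, S 1,
      (forall x y, S x -> S y -> S (x - y)),
      (forall x y, S x -> S y -> S (x * y)) &
      (forall x, S x -> S x^-1)].

Definition is_valuation (v : C -> rat) : Prop :=
  (forall x y, x != 0 -> y != 0 -> v (x * y) = v x + v y) /\
  (forall x y, x != 0 -> y != 0 -> x + y != 0 -> Num.min (v x) (v y) <= v (x + y)).

Definition close (v : C -> rat) (N : nat) (x y : C) : Prop :=
  x = y \/ N%:R <= v (x - y).

Definition cauchy_seq (v : C -> rat) (a : nat -> C) : Prop :=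
  forall N : nat, exists M : nat, forall i j, (M <= i)%N -> (M <= j)%N ->
    close v N (a i) (a j).

Definition converges_to (v : C -> rat) (a : nat -> C) (l : C) : Prop :=
  forall N : nat, exists M : nat, forall i, (M <= i)%N -> close v N (a i) l.

Definition integral_in (v : C -> rat) (K : C -> Prop) (x : C) : Prop :=
  K x /\ (x = 0 \/ 0 <= v x).

(* The local setting: K is a complete discretely valued field of
   characteristic p with normalized valuation v|K and finite residue field,
   inside the algebraically closed valued field (C, v). *)
Definition local_setting (p : nat) (v : C -> rat) (K : C -> Prop) : Prop :=
  [/\ prime p, p%:R = 0 :> C, is_valuation v & is_subfield K] /\
  [/\ (forall x, K x -> x != 0 -> exists z : int, v x = z%:~R),
      (exists pi, K pi /\ pi != 0 /\ v pi = 1),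
      (forall a : nat -> C, (forall i, K (a i)) -> cauchy_seq v a ->
          exists2 l, K l & converges_to v a l) &
      (exists s : seq C, (forall y, y \in s -> integral_in v K y) /\
          forall x, integral_in v K x ->
            exists2 y, y \in s & (x - y = 0 \/ 0 < v (x - y)))].

Definition finite_ext (F E : C -> Prop) : Prop :=
  [/\ is_subfield E, (forall x, F x -> E x) &
      exists b : seq C, (forall y, y \in b -> E y) /\
        forall x, E x -> exists c : nat -> C, (forall i, F (c i)) /\
          x = \sum_(i < size b) c i * b`_i].

Definition purely_insep (p : nat) (F E : C -> Prop) : Prop :=
  forall x, E x -> exists k : nat, F (x ^+ (p ^ k)).

(* e = e_{L/K}: v(L^x) = (1/e) Z, i.e. v_L = e * v_P *)
Definition ram_index (v : C -> rat) (L : C -> Prop) (e : nat) : Prop :=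
  (0 < e)%N /\
  (forall x, L x -> x != 0 -> exists z : int, e%:R * v x = z%:~R) /\
  (exists x, L x /\ x != 0 /\ e%:R * v x = 1).

(* equality of the classes of x, y in C^+ = C^x / mu_C *)
Definition pos_eq (x y : C) : Prop :=
  exists m : nat, (0 < m)%N /\ (x / y) ^+ m = 1.

End Defs.

(* Write alpha = X^n u with X in L and u a unit of L; this is possible because
   e v(alpha) is divisible by n.  The residue field of L is finite, so two powers of u
   agree modulo the maximal ideal and some u^M is a principal unit.  Write
   n M = p^b N with p not dividing N.  With Q = p^(totient N) we have Q = 1 mod N, and
   in characteristic p the powers u^(M Q^t) tend to 1 because u^(M Q^t) - 1 =
   (u^M - 1)^(Q^t); hence suitable powers of u^M converge in the complete field L to an
   N-th root r of u^M.  A p^b-th root g of r generates a purely inseparable extension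
   L(g) of L, and (X g)^n / alpha is an M-th root of unity. *)

From HB Require Import structures.
From mathcomp Require Import all_boot all_order all_algebra.
From mathcomp Require Import cyclic.
From mathcomp Require Import lra ring.
From Stdlib Require Import IndefiniteDescription Classical.
Set Implicit Arguments. Unset Strict Implicit. Unset Printing Implicit Defensive.
Import Order.TTheory GRing.Theory Num.Theory.
Local Open Scope ring_scope.

Lemma rat_le_nat (q : rat) : exists n : nat, q <= n%:R.
Proof.
case: (lerP 0 q) => hq; last by exists 0%N; apply/ltW.
by exists (Num.bound q); apply/ltW/archi_boundP.
Qed.

Lemma exists_common_bound (P : nat -> nat -> Prop) m :
    (forall i M M', (M <= M')%N -> P i M -> P i M') ->
    (forall i, (i < m)%N -> exists M, P i M) ->
  exists M, forall i, (i < m)%N -> P i M.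
Proof.
move=> Pmono; elim: m => [|m IH] H; first by exists 0%N.
have [M1 HM1] : exists M, forall i, (i < m)%N -> P i M.
  by apply: IH => i /ltnW; apply: H.
have [M2 HM2] := H m (ltnSn m).
exists (maxn M1 M2) => i; rewrite ltnS leq_eqVlt => /orP [/eqP ->|lt_im].
  exact: Pmono (leq_maxr _ _) HM2.
exact: Pmono (leq_maxl _ _) (HM1 i lt_im).
Qed.

Lemma pigeonhole_nat (T : finType) (g : nat -> T) :
  exists i j, (i < j)%N /\ g i = g j.
Proof.
pose h (i : 'I_#|T|.+1) := g i.
have /injectivePn [x [y neq_xy hxy]] : ~~ injectiveb h.
  by apply/negP => /injectiveP /leq_card; rewrite card_ord ltnn.
case: (ltngtP x y) => [lt_xy|lt_yx|/val_inj eq_xy]; first by exists x, y.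
  by exists y, x.
by rewrite eq_xy eqxx in neq_xy.
Qed.

Lemma exists_p_decomp p m : prime p -> (0 < m)%N ->
  exists b N, m = (p ^ b * N)%N /\ (0 < N)%N /\ ~~ (p %| N)%N.
Proof.
move=> p_pr m_gt0; exists (logn p m), (m`_p^')%N.
by rewrite -p_part partnC // part_gt0 -p'natE ?part_pnat.
Qed.

Lemma eventually_le_mul (d : rat) (N : nat) : 0 < d ->
  exists M : nat, forall t, (M <= t)%N -> N%:R <= t%:R * d.
Proof.
move=> d_gt0; have [M hM] := rat_le_nat (N%:R / d); exists M => t le_Mt.
by rewrite -ler_pdivrMr //; apply: le_trans hM _; rewrite ler_nat.
Qed.

Lemma closed_field_root (C : closedFieldType) (r : C) m : (0 < m)%N ->
  exists g : C, g ^+ m = r.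
Proof.
move=> m_gt0; have [g hg] := solve_monicpoly (fun i => if i == 0%N then r else 0) m_gt0.
exists g; rewrite hg -(prednK m_gt0) big_ord_recl /= expr0 mulr1 big1 ?addr0 // => i _.
by rewrite mul0r.
Qed.

Section Valuation.
Variables (C : fieldType) (v : C -> rat).
Hypothesis hv : is_valuation v.

Definition vge (N : rat) (x : C) := x = 0 \/ N <= v x.

Lemma valM x y : x != 0 -> y != 0 -> v (x * y) = v x + v y.
Proof. by case: hv => h _; apply: h. Qed.

Lemma val1 : v 1 = 0.
Proof. by have := valM (oner_neq0 C) (oner_neq0 C); rewrite mulr1; lra. Qed.

Lemma valV x : x != 0 -> v x^-1 = - v x.
Proof.
move=> x0; have := valM x0 (invr_neq0 x0).
by rewrite divff // val1; lra.
Qed.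

Lemma valX x m : x != 0 -> v (x ^+ m) = m%:R * v x.
Proof.
move=> x0; elim: m => [|m IH]; first by rewrite expr0 val1 mul0r.
by rewrite exprS valM ?expf_neq0 // IH mulrSr mulrDl mul1r addrC.
Qed.

Lemma valXz x (k : int) : x != 0 -> v (x ^ k) = k%:~R * v x.
Proof.
move=> x0; case: k => m; first by rewrite -exprnP valX.
by rewrite NegzE -exprnN valV ?expf_neq0 // valX // intrN mulNr.
Qed.

Lemma valN x : v (- x) = v x.
Proof.
have valN1 : v (-1) = 0.
  have N10 : (-1 : C) != 0 by rewrite oppr_eq0 oner_neq0.
  by have := valM N10 N10; rewrite mulrNN mulr1 val1; lra.
have [->|x0] := eqVneq x 0; first by rewrite oppr0.
by rewrite -mulN1r valM ?oppr_eq0 ?oner_neq0 // valN1 add0r.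
Qed.

Lemma vge_val x : vge (v x) x. Proof. by right. Qed.

Lemma vge1 : vge 0 1. Proof. by right; rewrite val1. Qed.

Lemma vge_le N M x : M <= N -> vge N x -> vge M x.
Proof. by move=> le_MN [->|h]; [left|right; apply: le_trans h]. Qed.

Lemma vgeN N x : vge N x -> vge N (- x).
Proof. by case=> [->|h]; [left; rewrite oppr0|right; rewrite valN]. Qed.

Lemma vgeD N x y : vge N x -> vge N y -> vge N (x + y).
Proof.
case=> [->|hx]; first by rewrite add0r.
case=> [->|hy]; first by rewrite addr0; right.
have [->|x0] := eqVneq x 0; first by rewrite add0r; right.
have [->|y0] := eqVneq y 0; first by rewrite addr0; right.
have [->|xy0] := eqVneq (x + y) 0; first by left.
right; case: hv => _ h; apply: le_trans (h _ _ x0 y0 xy0).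
by rewrite le_min hx hy.
Qed.

Lemma vgeB N x y : vge N x -> vge N y -> vge N (x - y).
Proof. by move=> hx /vgeN; apply: vgeD. Qed.

Lemma vgeM N M x y : vge N x -> vge M y -> vge (N + M) (x * y).
Proof.
case=> [->|hx]; first by rewrite mul0r; left.
case=> [->|hy]; first by rewrite mulr0; left.
have [->|x0] := eqVneq x 0; first by rewrite mul0r; left.
have [->|y0] := eqVneq y 0; first by rewrite mulr0; left.
by right; rewrite valM // lerD.
Qed.

Lemma vgeX N x m : vge N x -> vge (m%:R * N) (x ^+ m).
Proof.
move=> hx; elim: m => [|m IH]; first by rewrite mul0r expr0; apply: vge1.
by rewrite exprS mulrSr mulrDl mul1r addrC; apply: vgeM.
Qed.

Lemma vge0X x m : vge 0 x -> vge 0 (x ^+ m).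
Proof. by move/(vgeX m); rewrite mulr0. Qed.

Lemma vge_sum N m (F : 'I_m -> C) :
  (forall i, vge N (F i)) -> vge N (\sum_(i < m) F i).
Proof. by move=> H; apply: (big_ind (vge N)) => //; [left|apply: vgeD]. Qed.

Lemma vge0_of_near1 d x : 0 <= d -> vge d (x - 1) -> vge 0 x.
Proof. by move=> d_ge0 /(vge_le d_ge0) x_near1; rewrite -(subrK 1 x); apply: vgeD vge1. Qed.

Lemma vge_subXX N x y m : vge 0 x -> vge 0 y -> vge N (x - y) -> vge N (x ^+ m - y ^+ m).
Proof.
move=> x_ge0 y_ge0 xy; rewrite subrXX -[N]addr0; apply: vgeM => //.
by apply: vge_sum => i; rewrite -[0]addr0; apply: vgeM; apply: vge0X.
Qed.

Lemma vgeX_sub1 d x m : vge 0 x -> vge d (x - 1) -> vge d (x ^+ m - 1).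
Proof. by move=> x_ge0; rewrite -{2}(expr1n C m); apply: vge_subXX vge1. Qed.

Lemma vge_all_eq0 x : (forall N : nat, vge N%:R x) -> x = 0.
Proof.
move=> H; have [//|x0] := eqVneq x 0.
have [n le_vx_n] := rat_le_nat (v x).
case: (H n.+1) => // h; exfalso.
by have := le_trans h le_vx_n; rewrite ler_nat ltnn.
Qed.

Lemma closeE N x y : close v N x y <-> vge N%:R (x - y).
Proof.
rewrite /close /vge; split; case=> h; try by right.
  by left; rewrite h subrr.
by left; apply/eqP; rewrite -subr_eq0; apply/eqP.
Qed.

Lemma vge_telescope (a : nat -> C) M N :
    (forall t, (M <= t)%N -> vge N (a t.+1 - a t)) ->
  forall i j, (M <= i)%N -> (M <= j)%N -> vge N (a i - a j).
Proof.
move=> H.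
have from_M k : vge N (a (M + k)%N - a M).
  elim: k => [|k IH]; first by rewrite addn0 subrr; left.
  rewrite addnS -(subrK (a (M + k)%N) (a (M + k).+1)) -addrA.
  by apply: vgeD => //; apply: H; apply: leq_addr.
move=> i j le_Mi le_Mj.
have -> : a i - a j = (a i - a M) - (a j - a M) by ring.
by apply: vgeB; [rewrite -(subnKC le_Mi)|rewrite -(subnKC le_Mj)].
Qed.

Lemma vge0_lim (a : nat -> C) l :
  (forall t, vge 0 (a t)) -> converges_to v a l -> vge 0 l.
Proof.
move=> a_ge0 /(_ 0%N) [M /(_ M (leqnn M)) /closeE close_M].
by rewrite -(subrK (a M) l) -opprB; apply: vgeD; [apply: vgeN|apply: a_ge0].
Qed.

End Valuation.

Section Subfield.
Variables (C : fieldType) (K : C -> Prop).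
Hypothesis hK : is_subfield K.

Lemma subf0 : K 0. Proof. by case: hK. Qed.
Lemma subf1 : K 1. Proof. by case: hK. Qed.
Lemma subfB x y : K x -> K y -> K (x - y). Proof. by case: hK => _ _ h _ _; apply: h. Qed.
Lemma subfM x y : K x -> K y -> K (x * y). Proof. by case: hK => _ _ _ h _; apply: h. Qed.
Lemma subfV x : K x -> K x^-1. Proof. by case: hK => _ _ _ _ h; apply: h. Qed.
Lemma subfN x : K x -> K (- x). Proof. by rewrite -sub0r; apply/subfB/subf0. Qed.

Lemma subfD x y : K x -> K y -> K (x + y).
Proof. by move=> Kx /subfN Ky; rewrite -[y]opprK; apply: subfB. Qed.

Lemma subfX x m : K x -> K (x ^+ m).
Proof.
by move=> Kx; elim: m => [|m IH]; [rewrite expr0; apply: subf1|rewrite exprS; apply: subfM].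
Qed.

Lemma subfXz x (k : int) : K x -> K (x ^ k).
Proof.
move=> Kx; case: k => m; first by rewrite -exprnP; apply: subfX.
by rewrite NegzE -exprnN; apply/subfV/subfX.
Qed.

Lemma subf_sum m (F : 'I_m -> C) : (forall i, K (F i)) -> K (\sum_(i < m) F i).
Proof. by move=> KF; apply: (big_ind K) => //; [apply: subf0|apply: subfD]. Qed.

Definition kspan (s : seq C) (x : C) :=
  exists c : nat -> C, (forall i, K (c i)) /\ x = \sum_(i < size s) c i * s`_i.

Definition kfree (s : seq C) :=
  forall c : nat -> C, (forall i, K (c i)) -> \sum_(i < size s) c i * s`_i = 0 ->
    forall i, (i < size s)%N -> c i = 0.

Definition ccons (k : C) (d : nat -> C) (i : nat) : C :=
  if i is j.+1 then d j else k.

Lemma ccons_subf k d : K k -> (forall i, K (d i)) -> forall i, K (ccons k d i).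
Proof. by move=> Kk Kd [|i] /=. Qed.

Lemma sum_coord_cons a s (c : nat -> C) :
  \sum_(i < size (a :: s)) c i * (a :: s)`_i =
  c 0%N * a + \sum_(i < size s) c i.+1 * s`_i.
Proof. by rewrite big_ord_recl; congr (_ + _); apply: eq_bigr => i _; rewrite lift0. Qed.

Lemma kspanD s x y : kspan s x -> kspan s y -> kspan s (x + y).
Proof.
move=> [c [Kc ->]] [d [Kd ->]]; exists (fun i => c i + d i); split.
  by move=> i; apply: subfD.
by rewrite -big_split; apply: eq_bigr => i _; rewrite mulrDl.
Qed.

Lemma kspanZ s k x : K k -> kspan s x -> kspan s (k * x).
Proof.
move=> Kk [c [Kc ->]]; exists (fun i => k * c i); split; first by move=> i; apply: subfM.
by rewrite mulr_sumr; apply: eq_bigr => i _; rewrite mulrA.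
Qed.

Lemma kspan_consP a s x : kspan (a :: s) x <-> exists2 k, K k & kspan s (x - k * a).
Proof.
split=> [[c [Kc ->]]|[k Kk [d [Kd hx]]]].
  exists (c 0%N) => //; rewrite sum_coord_cons addrAC subrr add0r.
  by exists (fun i => c i.+1).
exists (ccons k d); split; first exact: ccons_subf.
by rewrite sum_coord_cons /= -hx addrC subrK.
Qed.

Lemma kfree_consP a s : kfree (a :: s) <-> kfree s /\ ~ kspan s a.
Proof.
split=> [free_as|[free_s span_a] c Kc].
  split=> [c Kc sum0 i lt_is|[d [Kd ha]]].
    have := free_as (ccons 0 c) (ccons_subf subf0 Kc).
    by rewrite sum_coord_cons mul0r add0r => /(_ sum0 i.+1); apply.
  have := free_as (ccons (-1) d) (ccons_subf (subfN subf1) Kd).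
  rewrite sum_coord_cons /= -ha mulN1r addNr => /(_ erefl 0%N erefl) /eqP.
  by rewrite oppr_eq0 oner_eq0.
rewrite sum_coord_cons => sum0.
have c00 : c 0%N = 0.
  have [//|c0] := eqVneq (c 0%N) 0; case: span_a.
  have -> : a = - (c 0%N)^-1 * \sum_(i < size s) c i.+1 * s`_i.
    have ca : c 0%N * a = - \sum_(i < size s) c i.+1 * s`_i.
      by apply/eqP; rewrite -addr_eq0 sum0.
    by rewrite -[a](mulKf c0) ca mulrN mulNr.
  by apply: kspanZ; [apply/subfN/subfV|exists (fun i => c i.+1)].
move: sum0; rewrite c00 mul0r add0r => sum0.
by case=> [|i] //= lt_is; apply: (free_s (fun i => c i.+1)).
Qed.

Lemma exists_free_subbasis (b : seq C) : exists2 bs, kfree bs &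
  {subset bs <= b} /\ forall x, kspan b x -> kspan bs x.
Proof.
elim: b => [|a b [bs free_bs [sub_bs span_bs]]].
  by exists [::] => //; split=> // c _ _ i.
have [span_a|nspan_a] := classic (kspan bs a).
  exists bs => //; split=> [y /sub_bs b_y|x /kspan_consP [k Kk /span_bs span_x]].
    by rewrite inE b_y orbT.
  by rewrite -(subrK (k * a) x); apply: kspanD => //; apply: kspanZ.
exists (a :: bs); first exact/kfree_consP.
split=> [y|x /kspan_consP [k Kk /span_bs span_x]].
  by rewrite !inE => /orP [->//|/sub_bs ->]; rewrite orbT.
by apply/kspan_consP; exists k.
Qed.

End Subfield.

Section CoordinateBounds.
Variables (C : fieldType) (v : C -> rat) (K : C -> Prop).
Hypothesis hv : is_valuation v.
Hypothesis hK : is_subfield K.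
Hypothesis K_complete : forall a : nat -> C, (forall i, K (a i)) -> cauchy_seq v a ->
  exists2 l, K l & converges_to v a l.

Lemma vge_seq_bound (s : seq C) : exists b : rat, forall i, vge v b s`_i.
Proof.
have [M HM] : exists M : nat, forall i, (i < size s)%N -> vge v (- M%:R) s`_i.
  apply: (@exists_common_bound (fun i M => vge v (- M%:R) s`_i)).
    by move=> i M M' le_MM'; apply: vge_le; rewrite lerN2 ler_nat.
  by move=> i _; have [M hM] := rat_le_nat (- v s`_i); exists M; right; lra.
exists (- M%:R) => i; have [/HM //|le_si] := ltnP i (size s).
by rewrite nth_default //; left.
Qed.

Definition coord_bound (s : seq C) (B : rat) :=
  forall c : nat -> C, (forall i, K (c i)) -> forall N : rat,
    vge v N (\sum_(i < size s) c i * s`_i) ->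
  forall i, (i < size s)%N -> vge v (N - B) (c i).

Lemma sum_coordB (s : seq C) (c d : nat -> C) :
  \sum_(i < size s) c i * s`_i - \sum_(i < size s) d i * s`_i =
  \sum_(i < size s) (c i - d i) * s`_i.
Proof. by rewrite -sumrB; apply: eq_bigr => i _; rewrite mulrBl. Qed.

Lemma cauchy_coord_limit (s : seq C) B (c : nat -> nat -> C) :
    coord_bound s B -> (forall t i, K (c t i)) ->
    cauchy_seq v (fun t => \sum_(i < size s) c t i * s`_i) ->
  exists2 l : nat -> C, forall i, K (l i) &
    converges_to v (fun t => \sum_(i < size s) c t i * s`_i)
      (\sum_(i < size s) l i * s`_i).
Proof.
move=> hB Kc c_cauchy.
have coord_lim i : exists li, (i < size s)%N -> K li /\ converges_to v (c^~ i) li.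
  have [lt_is|] := ltnP i (size s); last by exists 0.
  have [|li Kli hli] := K_complete (Kc^~ i); last by exists li.
  move=> N; have [N' hN'] := rat_le_nat (N%:R + B).
  have [M hM] := c_cauchy N'; exists M => t t' le_Mt le_Mt'; apply/closeE.
  move: (hM t t' le_Mt le_Mt') => /closeE; rewrite sum_coordB.
  move=> /(hB (fun j => c t j - c t' j) (fun j => subfB hK (Kc t j) (Kc t' j))).
  by move=> /(_ i lt_is); apply: vge_le; lra.
have [l hl] := functional_choice _ coord_lim.
exists (fun i => if (i < size s)%N then l i else 0).
  by move=> i; case: ifP => [/hl []|_] //; apply: subf0.
under [X in converges_to _ _ X]eq_bigr => i _ do rewrite ltn_ord.
move=> N; have [b hb] := vge_seq_bound s.
have [N' hN'] := rat_le_nat (N%:R - b).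
have [M hM] : exists M : nat, forall i, (i < size s)%N ->
    forall t, (M <= t)%N -> close v N' (c t i) (l i).
  apply: (@exists_common_bound (fun i M => forall t, (M <= t)%N -> close v N' (c t i) (l i))).
    by move=> i M M' le_MM' H t /(leq_trans le_MM'); apply: H.
  by move=> i /hl [_ /(_ N') [M hM]]; exists M.
exists M => t le_Mt; apply/closeE; rewrite sum_coordB; apply: (vge_sum hv) => i.
move: (hM i (ltn_ord i) t le_Mt) => /closeE /(vgeM hv)/(_ (hb i)).
by apply: vge_le; lra.
Qed.

Lemma kspan_addr_neq0 (s : seq C) a (d : nat -> C) : (forall i, K (d i)) ->
  ~ kspan K s a -> a + \sum_(i < size s) d i * s`_i != 0.
Proof.
move=> Kd span_a; apply/eqP => sum0; apply: span_a.
exists (fun i => - d i); split; first by move=> i; apply: subfN.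
have -> : a = - \sum_(i < size s) d i * s`_i by apply/eqP; rewrite -addr_eq0 sum0.
by rewrite -sumrN; apply: eq_bigr => i _; rewrite mulNr.
Qed.

(* By completeness, a sequence in [a + span s] whose valuations tend to
   infinity would converge to an element of [a + span s] of infinite valuation. *)
Lemma val_off_kspan_bounded (s : seq C) a B :
    coord_bound s B -> ~ kspan K s a ->
  exists D, forall d : nat -> C, (forall i, K (d i)) ->
    v (a + \sum_(i < size s) d i * s`_i) <= D.
Proof.
move=> hB span_a; apply: NNPP => unbounded.
have far t : exists d : nat -> C, (forall i, K (d i)) /\
    t%:R < v (a + \sum_(i < size s) d i * s`_i).
  apply: NNPP => not_far; apply: unbounded; exists t%:R => d Kd.
  by rewrite leNgt; apply/negP => lt; apply: not_far; exists d.
have [c hc] := functional_choice _ far.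
have Kc t i : K (c t i) by case: (hc t).
have vge_c t (N : rat) : N <= t%:R -> vge v N (a + \sum_(i < size s) c t i * s`_i).
  by move=> le_Nt; right; case: (hc t) => _ /ltW; apply: le_trans.
have c_cauchy : cauchy_seq v (fun t => \sum_(i < size s) c t i * s`_i).
  move=> N; exists N => t t' le_Nt le_Nt'; apply/closeE.
  rewrite -[X in X - _](addKr a) -[X in _ - X](addKr a) opprD addrACA subrr add0r.
  by apply: (vgeB hv); apply: vge_c; rewrite ler_nat.
have [l Kl l_lim] := cauchy_coord_limit hB Kc c_cauchy.
have /negP[] := kspan_addr_neq0 Kl span_a; apply/eqP.
apply: vge_all_eq0 => N; have [M hM] := l_lim N.
pose t := maxn N M.
have -> : a + \sum_(i < size s) l i * s`_i =
    (a + \sum_(i < size s) c t i * s`_i) -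
    (\sum_(i < size s) c t i * s`_i - \sum_(i < size s) l i * s`_i) by ring.
apply: (vgeB hv).
  by apply: vge_c; rewrite ler_nat leq_maxl.
by apply/closeE; apply: hM; apply: leq_maxr.
Qed.

Lemma coord_bound_cons (s : seq C) a B D :
    coord_bound s B ->
    (forall d : nat -> C, (forall i, K (d i)) ->
      a + \sum_(i < size s) d i * s`_i != 0 /\ v (a + \sum_(i < size s) d i * s`_i) <= D) ->
  coord_bound (a :: s) (`|D| + `|D - v a| + `|B|).
Proof.
move=> hB hD c Kc N; rewrite sum_coord_cons => hx i lt_i.
have [[[D_le B_le] Da_le] [[D_ge0 B_ge0] Da_ge0]] :=
  ((ler_norm D, ler_norm B, ler_norm (D - v a)),
   (normr_ge0 D, normr_ge0 B, normr_ge0 (D - v a))).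
have [c00|c0] := eqVneq (c 0%N) 0.
  rewrite c00 mul0r add0r in hx.
  case: i lt_i => [|j] lt_j; first by rewrite c00; left.
  by move: (hB (fun j => c j.+1) (fun j => Kc j.+1) _ hx j lt_j); apply: vge_le; lra.
pose w := a + \sum_(i < size s) (c i.+1 / c 0%N) * s`_i.
have [w0 vw] : w != 0 /\ v w <= D.
  by apply: (hD (fun i => c i.+1 / c 0%N)) => j; apply: (subfM hK); [apply: Kc|apply/(subfV hK)/Kc].
have xw : c 0%N * a + \sum_(i < size s) c i.+1 * s`_i = c 0%N * w.
  rewrite /w mulrDr mulr_sumr; congr (_ + _); apply: eq_bigr => j _.
  by rewrite mulrA [c 0%N * _]mulrC divfK.
rewrite xw in hx.
have c0_ge : vge v (N - D) (c 0%N).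
  case: hx => [/eqP|hx]; first by rewrite mulf_eq0 (negbTE c0) (negbTE w0).
  by right; rewrite (valM hv) // in hx; lra.
case: i lt_i => [|j] lt_j; first by apply: vge_le c0_ge; lra.
have rest_ge : vge v (N - `|D - v a|) (\sum_(i < size s) c i.+1 * s`_i).
  have -> : \sum_(i < size s) c i.+1 * s`_i = c 0%N * w - c 0%N * a.
    by rewrite -xw addrAC subrr add0r.
  apply: (vgeB hv); first by apply: vge_le hx; lra.
  by move: (vgeM hv c0_ge (vge_val v a)); apply: vge_le; lra.
by move: (hB (fun j => c j.+1) (fun j => Kc j.+1) _ rest_ge j lt_j); apply: vge_le; lra.
Qed.

Lemma exists_coord_bound (s : seq C) : kfree K s -> exists B, coord_bound s B.
Proof.
elim: s => [|a s IH]; first by exists 0 => c _ N _ i.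
move=> /(kfree_consP hK) [/IH [B hB] span_a].
have [D hD] := val_off_kspan_bounded hB span_a.
exists (`|D| + `|D - v a| + `|B|); apply: coord_bound_cons hB _ => d Kd.
by split; [apply: kspan_addr_neq0|apply: hD].
Qed.

End CoordinateBounds.

Section Frobenius.
Variables (C : fieldType) (p : nat).
Hypothesis hp : p \in [pchar C].

Lemma pchar_nat_expn k : [pchar C].-nat (p ^ k)%N.
Proof. by rewrite pnatX pnatE ?hp //; apply: (pcharf_prime hp). Qed.

Lemma pchar_expn_gt0 k : (0 < p ^ k)%N.
Proof. by rewrite expn_gt0 prime_gt0 // (pcharf_prime hp). Qed.

Lemma expr_pcharB (x y : C) k : (x - y) ^+ (p ^ k) = x ^+ (p ^ k) - y ^+ (p ^ k).
Proof. by rewrite exprDn_pchar ?exprNn_pchar // pchar_nat_expn. Qed.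

Lemma expr_pchar_sum m (F : 'I_m -> C) k :
  (\sum_(i < m) F i) ^+ (p ^ k) = \sum_(i < m) F i ^+ (p ^ k).
Proof.
apply: (big_morph (fun x => x ^+ (p ^ k))) => [x y|].
  exact/exprDn_pchar/pchar_nat_expn.
by rewrite expr0n gtn_eqF // pchar_expn_gt0.
Qed.

End Frobenius.

Section CompleteExtension.
Variables (C : fieldType) (v : C -> rat) (K L : C -> Prop).
Hypothesis hv : is_valuation v.
Hypothesis hK : is_subfield K.
Hypothesis K_complete : forall a : nat -> C, (forall i, K (a i)) -> cauchy_seq v a ->
  exists2 l, K l & converges_to v a l.
Hypothesis hL : is_subfield L.
Hypothesis KL : forall x, K x -> L x.
Variable bs : seq C.
Hypothesis bsL : forall y, y \in bs -> L y.
Hypothesis bs_free : kfree K bs.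
Hypothesis bs_span : forall x, L x -> kspan K bs x.

Lemma finite_ext_complete (a : nat -> C) : (forall t, L (a t)) -> cauchy_seq v a ->
  exists2 l, L l & converges_to v a l.
Proof.
move=> La a_cauchy.
have [B hB] := exists_coord_bound hv hK K_complete bs_free.
have [c hc] := functional_choice _ (fun t => bs_span (La t)).
have Kc t i : K (c t i) by case: (hc t).
have a_sum t : a t = \sum_(i < size bs) c t i * bs`_i by case: (hc t).
have [|l Kl l_lim] := cauchy_coord_limit hv hK K_complete hB Kc.
  by move=> N; have [M hM] := a_cauchy N; exists M => i j; rewrite -!a_sum; apply: hM.
exists (\sum_(i < size bs) l i * bs`_i).
  apply: (subf_sum hL) => i; apply: (subfM hL); first exact/KL.
  by apply/bsL/mem_nth.
by move=> N; have [M hM] := l_lim N; exists M => t; rewrite a_sum; apply: hM.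
Qed.

Variable p : nat.
Hypothesis hp : p \in [pchar C].

Lemma vge_pchar_expn_sub1 x d k :
  vge v d (x - 1) -> vge v ((p ^ k)%N%:R * d) (x ^+ (p ^ k) - 1).
Proof. by move=> x_near1; rewrite -{1}(expr1n C (p ^ k)) -expr_pcharB //; apply: vgeX. Qed.

(* With [Q = p ^ totient N = 1 + m N], the elements [y t = u ^ (m (1 + Q + .. + Q^(t-1)))]
   satisfy [y t ^ N * u = u ^ (Q ^ t)], and [u ^ (Q ^ t) - 1 = (u - 1) ^ (Q ^ t)] tends to 0. *)
Lemma principal_unit_root (u : C) (N : nat) (d : rat) : L u -> 0 < d ->
    vge v d (u - 1) -> (0 < N)%N -> ~~ (p %| N)%N ->
  exists2 r, L r & r ^+ N = u.
Proof.
move=> Lu d_gt0 u_near1 N_gt0 pN.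
have p_pr : prime p := pcharf_prime hp.
pose Q := (p ^ totient N)%N.
have Q_gt1 : (1 < Q)%N by rewrite -[1%N](expn0 p) ltn_exp2l ?prime_gt1 ?totient_gt0.
have N_dvd : (N %| Q.-1)%N.
  have coprime_pN : coprime p N by rewrite prime_coprime.
  rewrite -subn1 -eqn_mod_dvd; last exact: ltnW.
  by apply/eqP; apply: Euler_exp_totient.
pose m := (Q.-1 %/ N)%N.
pose y t := u ^+ (m * \sum_(i < t) Q ^ i).
have u_ge0 : vge v 0 u := vge0_of_near1 hv (ltW d_gt0) u_near1.
have y_ge0 t : vge v 0 (y t) by apply: (vge0X hv).
have y_pow t : y t ^+ N * u = u ^+ (Q ^ t).
  rewrite -exprM -exprSr mulnAC divnK // -predn_exp prednK //.
  by rewrite expn_gt0 ltnW.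
have y_succ t : y t.+1 - y t = y t * ((u ^+ m) ^+ (Q ^ t) - 1).
  by rewrite /y big_ord_recr /= mulnDr exprD -exprM mulrBr mulr1.
have Q_near1 (x : C) t : vge v d (x - 1) -> vge v (t%:R * d) (x ^+ (Q ^ t) - 1).
  move=> /(vge_pchar_expn_sub1 (totient N * t)); rewrite expnM; apply: vge_le.
  by rewrite ler_pM2r // ler_nat ltnW // ltn_expl.
have [|yl Lyl y_lim] := finite_ext_complete (a := y) (fun t => subfX hL _ Lu).
  have um_near1 : vge v d (u ^+ m - 1) by apply: (vgeX_sub1 hv).
  move=> N'; have [M hM] := eventually_le_mul N' d_gt0.
  exists M => t1 t2 le_Mt1 le_Mt2; apply/closeE.
  apply: (vge_telescope hv) le_Mt1 le_Mt2 => t le_Mt; rewrite y_succ -[N'%:R]add0r.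
  by apply: (vgeM hv) (vge_le (hM t le_Mt) (Q_near1 _ _ um_near1)).
have yl_pow : yl ^+ N * u = 1.
  apply/eqP; rewrite -subr_eq0; apply/eqP/vge_all_eq0 => N'.
  have [M0 hM0] := y_lim N'; have [M1 hM1] := eventually_le_mul N' d_gt0.
  pose t := maxn M0 M1.
  have -> : yl ^+ N * u - 1 = (yl ^+ N - y t ^+ N) * u + (y t ^+ N * u - 1) by ring.
  apply: (vgeD hv); last first.
    by rewrite y_pow; apply: vge_le (Q_near1 _ _ u_near1); apply/hM1/leq_maxr.
  rewrite -[N'%:R]addr0; apply: (vgeM hv) => //; apply: (vge_subXX hv) => //.
    exact: (vge0_lim hv) y_lim.
  by rewrite -opprB; apply/(vgeN hv)/closeE/hM0/leq_maxl.
have yl0 : yl != 0.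
  by apply: contra_eq_neq yl_pow => ->; rewrite expr0n gtn_eqF // mul0r eq_sym oner_neq0.
exists yl^-1; first exact: (subfV hL).
by apply: (mulfI (expf_neq0 N yl0)); rewrite exprVn divff ?expf_neq0 // yl_pow.
Qed.

End CompleteExtension.

Section FiniteResidueField.
Variables (C : fieldType) (v : C -> rat) (K L : C -> Prop).
Hypothesis hv : is_valuation v.
Hypothesis hK : is_subfield K.
Hypothesis K_complete : forall a : nat -> C, (forall i, K (a i)) -> cauchy_seq v a ->
  exists2 l, K l & converges_to v a l.
Hypothesis K_val_int : forall x, K x -> x != 0 -> exists z : int, v x = z%:~R.
Variable pi : C.
Hypotheses (Kpi : K pi) (pi0 : pi != 0) (v_pi : v pi = 1).
Variable s0 : seq C.
Hypothesis s0_int : forall y, y \in s0 -> integral_in v K y.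
Hypothesis s0_res : forall x, integral_in v K x ->
  exists2 y, y \in s0 & (x - y = 0 \/ 0 < v (x - y)).

Lemma vge1_of_gt0 x : K x -> (x = 0 \/ 0 < v x) -> vge v 1 x.
Proof.
move=> Kx [->|vx_gt0]; first by left.
have [->|x0] := eqVneq x 0; first by left.
have [z vx] := K_val_int Kx x0; right; move: vx_gt0.
by rewrite vx ltr0z gtz0_ge1 -(ler1z rat).
Qed.

Lemma val_piX m : v (pi ^+ m) = m%:R.
Proof. by rewrite (valX hv) // v_pi mulr1. Qed.

Lemma residue_reps (R : nat) : exists2 A : seq C, (forall a, a \in A -> K a) &
  forall z, K z -> vge v 0 z -> exists2 a, a \in A & vge v R%:R (z - a).
Proof.
elim: R => [|R [A KA A_reps]].
  exists [:: 0] => [a|z _ z_int]; first by rewrite inE => /eqP ->; apply: subf0.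
  by exists 0; rewrite ?inE // subr0.
have piR0 : pi ^+ R != 0 by apply: expf_neq0.
exists [seq a + pi ^+ R * y | a <- A, y <- s0].
  move=> _ /allpairsP [[a y] [/= Aa s0y ->]].
  apply: (subfD hK); first exact: KA.
  by apply: (subfM hK); [apply: (subfX hK)|case: (s0_int s0y)].
move=> z Kz z_int; have [a Aa za] := A_reps z Kz z_int.
pose q := (z - a) / pi ^+ R.
have q_int : integral_in v K q.
  split; first by apply: (subfM hK); [apply/(subfB hK)/KA|apply/(subfV hK)/(subfX hK)].
  have [za0|za0] := eqVneq (z - a) 0; first by left; rewrite /q za0 mul0r.
  case: za => [/eqP|vza]; first by rewrite (negbTE za0).
  by right; rewrite /q (valM hv) ?invr_eq0 // (valV hv) // val_piX; lra.
have [y s0y qy] := s0_res q_int.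
exists (a + pi ^+ R * y); first exact: allpairs_f.
have -> : z - (a + pi ^+ R * y) = pi ^+ R * (q - y).
  by rewrite mulrBr /q mulrCA divff // mulr1; ring.
rewrite -addn1 natrD mulr1n; apply: (vgeM hv); first by right; rewrite val_piX.
apply: vge1_of_gt0 qy; apply: (subfB hK); first by case: q_int.
by case: (s0_int s0y).
Qed.

Hypothesis hL : is_subfield L.
Variable bs : seq C.
Hypothesis bs_free : kfree K bs.
Hypothesis bs_span : forall x, L x -> kspan K bs x.

(* Coordinates of an integral [x] have bounded denominators, and each is determined
   modulo a high power of [pi] by one of finitely many residues. *)
Lemma integral_finite_approx : exists (T : finType) (ap : T -> C),
  forall x, L x -> vge v 0 x -> exists f, vge v 1 (x - ap f).
Proof.
have [B hB] := exists_coord_bound hv hK K_complete bs_free.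
have [b hb] := vge_seq_bound v bs.
have [nB hnB] := rat_le_nat B; have [nb hnb] := rat_le_nat (- b).
have [A KA A_reps] := residue_reps (1 + nB + nb).
have piB0 : pi ^+ nB != 0 by apply: expf_neq0.
exists {ffun 'I_(size bs) -> 'I_(size A)}.
exists (fun f : {ffun 'I_(size bs) -> 'I_(size A)} =>
  \sum_(i < size bs) ((pi ^+ nB)^-1 * A`_(f i)) * bs`_i).
move=> x Lx x_int; have [c [Kc x_sum]] := bs_span Lx.
have coord_res (i : 'I_(size bs)) : exists j : 'I_(size A),
    vge v (1 + nB + nb)%N%:R (pi ^+ nB * c i - A`_j).
  have c_ge : vge v (- nB%:R) (c i).
    move: x_int; rewrite x_sum => /(hB c Kc) /(_ i (ltn_ord i)); apply: vge_le; lra.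
  have pic_int : vge v 0 (pi ^+ nB * c i).
    by move: (vgeM hv (vge_val v (pi ^+ nB)) c_ge); rewrite val_piX; apply: vge_le; lra.
  have [a Aa ha] := A_reps _ (subfM hK (subfX hK _ Kpi) (Kc i)) pic_int.
  by exists (Ordinal (etrans (index_mem a A) Aa)); rewrite /= nth_index.
have [g hg] := fin_all_exists coord_res.
exists [ffun i => g i]; rewrite x_sum -sumrB; apply: (vge_sum hv) => i.
rewrite ffunE -mulrBl.
have -> : c i - (pi ^+ nB)^-1 * A`_(g i) = (pi ^+ nB)^-1 * (pi ^+ nB * c i - A`_(g i)).
  by rewrite mulrBr mulKf.
apply: vge_le (vgeM hv (vgeM hv (vge_val v (pi ^+ nB)^-1) (hg i)) (hb i)).
by rewrite (valV hv) // val_piX !natrD; lra.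
Qed.

Lemma unit_pow_principal u : L u -> u != 0 -> v u = 0 ->
  exists2 M, (0 < M)%N & vge v 1 (u ^+ M - 1).
Proof.
move=> Lu u0 vu0.
have [T [ap ap_approx]] := integral_finite_approx.
have u_int t : vge v 0 (u ^+ t) by apply: (vge0X hv); right; rewrite vu0.
have [f hf] := functional_choice _ (fun t => ap_approx _ (subfX hL t Lu) (u_int t)).
have [t1 [t2 [lt_t12 f_eq]]] := pigeonhole_nat f.
have u_t12 : vge v 1 (u ^+ t2 - u ^+ t1).
  have -> : u ^+ t2 - u ^+ t1 = (u ^+ t2 - ap (f t2)) - (u ^+ t1 - ap (f t1)).
    by rewrite f_eq; ring.
  exact: (vgeB hv).
exists (t2 - t1)%N; first by rewrite subn_gt0.
have -> : u ^+ (t2 - t1) - 1 = (u ^+ t2 - u ^+ t1) * (u ^+ t1)^-1.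
  have ut1 : u ^+ t1 != 0 by apply: expf_neq0.
  by rewrite -{2}(subnKC (ltnW lt_t12)) exprD mulrBl divff // [u ^+ t1 * _]mulrC mulfK.
rewrite -[1]addr0; apply: (vgeM hv) => //.
by right; rewrite (valV hv) ?expf_neq0 // (valX hv) // vu0 mulr0 oppr0.
Qed.

End FiniteResidueField.

Section PurelyInseparableAdjunction.
Variables (C : fieldType) (p : nat) (L : C -> Prop) (b : nat) (g : C).
Hypothesis hp : p \in [pchar C].
Hypothesis hL : is_subfield L.
Hypothesis L_gpow : L (g ^+ (p ^ b)).

Definition adjoin (y : C) :=
  exists c : nat -> C, (forall i, L (c i)) /\ y = \sum_(i < p ^ b) c i * g ^+ i.

Lemma adjoin_monomial a j : L a -> (j < p ^ b)%N -> adjoin (a * g ^+ j).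
Proof.
move=> La lt_j; exists (fun i => if i == j then a else 0); split.
  by move=> i; case: ifP => _ //; apply: (subf0 hL).
rewrite (bigD1 (Ordinal lt_j)) //= eqxx big1 ?addr0 // => i.
by rewrite -val_eqE /= => /negbTE ->; rewrite mul0r.
Qed.

Lemma adjoin_of x : L x -> adjoin x.
Proof.
by move=> Lx; rewrite -[x]mulr1 -(expr0 g); apply: adjoin_monomial (pchar_expn_gt0 hp b).
Qed.

Lemma adjoinD x y : adjoin x -> adjoin y -> adjoin (x + y).
Proof.
move=> [c [Lc ->]] [d [Ld ->]]; exists (fun i => c i + d i); split.
  by move=> i; apply: (subfD hL).
by rewrite -big_split; apply: eq_bigr => i _; rewrite mulrDl.
Qed.

Lemma adjoinZ k x : L k -> adjoin x -> adjoin (k * x).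
Proof.
move=> Lk [c [Lc ->]]; exists (fun i => k * c i); split; first by move=> i; apply: (subfM hL).
by rewrite mulr_sumr; apply: eq_bigr => i _; rewrite mulrA.
Qed.

Lemma adjoin_sum m (F : 'I_m -> C) : (forall i, adjoin (F i)) -> adjoin (\sum_(i < m) F i).
Proof.
move=> hF; apply: (big_ind adjoin) => //; last exact: adjoinD.
exact/adjoin_of/(subf0 hL).
Qed.

Lemma adjoin_genX k : adjoin (g ^+ k).
Proof.
have lt_k : (k %% p ^ b < p ^ b)%N by rewrite ltn_pmod // (pchar_expn_gt0 hp b).
rewrite {1}(divn_eq k (p ^ b)) exprD mulnC exprM.
by apply: adjoin_monomial => //; apply: (subfX hL).
Qed.

Lemma adjoinM x y : adjoin x -> adjoin y -> adjoin (x * y).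
Proof.
move=> [c [Lc ->]] [d [Ld ->]]; rewrite mulr_suml; apply: adjoin_sum => i.
rewrite mulr_sumr; apply: adjoin_sum => j.
by rewrite mulrACA -exprD; apply: adjoinZ; [apply: (subfM hL)|apply: adjoin_genX].
Qed.

Lemma adjoin_pexpn x : adjoin x -> L (x ^+ (p ^ b)).
Proof.
move=> [c [Lc ->]]; rewrite expr_pchar_sum //; apply: (subf_sum hL) => i.
by rewrite exprMn -exprM mulnC exprM; apply: (subfM hL); apply: (subfX hL).
Qed.

Lemma adjoinV x : adjoin x -> adjoin x^-1.
Proof.
move=> adj_x; have [->|x0] := eqVneq x 0.
  by rewrite invr0; apply/adjoin_of/(subf0 hL).
have -> : x^-1 = (x ^+ (p ^ b))^-1 * x ^+ (p ^ b).-1.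
  by rewrite -(prednK (pchar_expn_gt0 hp b)) /= exprS invfM mulfVK // expf_neq0.
apply: adjoinZ; first exact/(subfV hL)/adjoin_pexpn.
by elim: (p ^ b).-1 => [|m IH]; [apply/adjoin_of/(subf1 hL)|rewrite exprS; apply: adjoinM].
Qed.

Lemma adjoin_subfield : is_subfield adjoin.
Proof.
split; [exact/adjoin_of/(subf0 hL)|exact/adjoin_of/(subf1 hL)| |exact: adjoinM|exact: adjoinV].
move=> x y adj_x adj_y; rewrite -mulN1r; apply: adjoinD => //.
by apply: adjoinZ => //; apply: (subfN hL); apply: (subf1 hL).
Qed.

Lemma adjoin_finite_ext : finite_ext L adjoin.
Proof.
split; [exact: adjoin_subfield|exact: adjoin_of|].
exists (mkseq (GRing.exp g) (p ^ b)); split; first by move=> _ /mapP [i _ ->]; apply: adjoin_genX.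
move=> x [c [Lc ->]]; exists c; split => //.
by rewrite size_mkseq; apply: eq_bigr => i _; rewrite nth_mkseq.
Qed.

Lemma adjoin_purely_insep : purely_insep p L adjoin.
Proof. by move=> x /adjoin_pexpn; exists b. Qed.

End PurelyInseparableAdjunction.

Lemma exists_unit_cofactor (C : fieldType) (v : C -> rat) (K L : C -> Prop) e n
    (alpha : C) (k : int) :
    is_valuation v -> is_subfield L -> (forall x, K x -> L x) -> ram_index v L e ->
    K alpha -> alpha != 0 -> e%:R * v alpha = (n%:Z * k)%:~R ->
  exists X u, [/\ L X, X != 0, L u, v u = 0 & alpha = X ^+ n * u].
Proof.
move=> hv hL KL [e_gt0 [_ [x [Lx [x0 v_x]]]]] Kalpha alpha0 v_alpha.
have X0 : x ^ k != 0 by apply: expfz_neq0.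
exists (x ^ k), (alpha / (x ^ k) ^+ n); split; first exact: (subfXz hL).
- exact: X0.
- by apply: (subfM hL); [apply: KL|apply/(subfV hL)/(subfX hL)/(subfXz hL)].
- have e0 : e%:R != 0 :> rat by rewrite pnatr_eq0 -lt0n.
  apply: (mulfI e0); rewrite mulr0 (valM hv) ?invr_eq0 ?expf_neq0 //.
  have v_X : e%:R * v (x ^ k) = k%:~R by rewrite (valXz hv) // mulrCA v_x mulr1.
  by rewrite (valV hv) ?expf_neq0 // (valX hv) // mulrDr v_alpha mulrN mulrCA v_X intrM subrr.
- by rewrite mulrC divfK ?expf_neq0.
Qed.

Lemma purely_insep_root (C : closedFieldType) p (L : C -> Prop) (X u r : C) n M N b :
    p \in [pchar C] -> is_subfield L -> L X -> X != 0 -> u != 0 -> L r ->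
    r ^+ N = u ^+ M -> (n * M = p ^ b * N)%N -> (0 < M)%N -> (0 < N)%N ->
  exists L1 : C -> Prop, finite_ext L L1 /\ purely_insep p L L1 /\
    exists beta : C, L1 beta /\ beta != 0 /\ pos_eq (beta ^+ n) (X ^+ n * u).
Proof.
move=> hp hL LX X0 u0 Lr r_N nM M_gt0 N_gt0.
have [g g_pb] := closed_field_root r (pchar_expn_gt0 hp b).
have Lg_pb : L (g ^+ (p ^ b)) by rewrite g_pb.
have g0 : g != 0.
  apply: contra_neq (expf_neq0 M u0) => g_0.
  by rewrite -r_N -g_pb g_0 expr0n (gtn_eqF (pchar_expn_gt0 hp b)) expr0n (gtn_eqF N_gt0).
exists (adjoin p L b g); split; first exact: adjoin_finite_ext.
split; first exact: adjoin_purely_insep.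
exists (X * g); split.
  by apply: adjoinM => //; [apply: adjoin_of|rewrite -[g]expr1; apply: adjoin_genX].
split; first by rewrite mulf_neq0.
exists M; split => //.
have -> : (X * g) ^+ n / (X ^+ n * u) = g ^+ n / u.
  by rewrite exprMn invfM mulrACA divff ?expf_neq0 // mul1r.
by rewrite exprMn exprVn -exprM nM exprM g_pb r_N divff // expf_neq0.
Qed.

Theorem lemma2p3 (p : nat) (C : closedFieldType) (v : C -> rat) (K : C -> Prop)
  (hloc : local_setting p v K)
  (n : nat) (hn : (0 < n)%N)
  (L : C -> Prop) (hL : finite_ext K L)
  (e : nat) (he : ram_index v L e)
  (alpha : C) (halK : K alpha) (hal0 : alpha != 0)
  (hdiv : exists k : int, e%:R * v alpha = (n%:Z * k)%:~R) :
  exists L1 : C -> Prop,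
    finite_ext L L1 /\ purely_insep p L L1 /\
    exists beta : C, L1 beta /\ beta != 0 /\ pos_eq (beta ^+ n) alpha.
Proof.
case: hloc => [[p_pr p0 hv hK] [K_val_int [pi [Kpi [pi0 v_pi]]] K_complete [s0 [s0_int s0_res]]]].
have hp : p \in [pchar C] by rewrite inE p_pr p0 eqxx.
case: hL => [Lsub KL [b0 [b0L b0_span]]].
have [bs bs_free [sub_bs bs_span]] := exists_free_subbasis hK b0.
have bsL y : y \in bs -> L y by move/sub_bs; apply: b0L.
have L_span y : L y -> kspan K bs y by move/b0_span; apply: bs_span.
have [k v_alpha] := hdiv.
have [X [u [LX X0 Lu v_u alpha_eq]]] := exists_unit_cofactor hv Lsub KL he halK hal0 v_alpha.
have u0 : u != 0 by move: hal0; rewrite alpha_eq mulf_eq0 negb_or => /andP[].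
have [M M_gt0 u_M] := unit_pow_principal hv hK K_complete K_val_int Kpi pi0 v_pi
  s0_int s0_res Lsub bs_free L_span Lu u0 v_u.
have nM_gt0 : (0 < n * M)%N by rewrite muln_gt0 hn.
have [b [N [nM [N_gt0 pN]]]] := exists_p_decomp p_pr nM_gt0.
have [r Lr r_N] := principal_unit_root hv hK K_complete Lsub KL bsL bs_free L_span hp
  (subfX Lsub M Lu) ltr01 u_M N_gt0 pN.
rewrite alpha_eq; exact: purely_insep_root hp Lsub LX X0 u0 Lr r_N nM M_gt0 N_gt0.
Qed.
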